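(* Let $m$ be a positive integer, let $\alpha>1$ with $56^m(\alpha-1)<1$, let $\mathcal{S}$ be an $\alpha$-Carleson family of dyadic cubes in $\mathbb{R}^n$, let $f\ge0$ be locally integrable, and for a positive integer $k$ let $\mathcal{S}_k=\{Q\in\mathcal{S}:\ 56^{-m(k+1)}<\frac{1}{|Q|}\int_Qf\le56^{-km}\}$. For $Q\in\mathcal{S}_k$ put $E_Q=Q\setminus\bigcup_{Q'\in\mathcal{S}_k,\,Q'\subsetneq Q}Q'$. Then for every $Q\in\mathcal{S}_k$, \[ \int_Qf\le\frac{1}{1-56^m(\alpha-1)}\int_{E_Q}f. \]
   Context: A family $\mathcal{S}$ of dyadic cubes is $\alpha$-Carleson ($\alpha>1$) if $\sum_{P\in\mathcal{S},\,P\subseteq Q}|P|\le\alpha|Q|$ for every $Q\in\mathcal{S}$. *)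

From HB Require Import structures.
From mathcomp Require Import all_boot all_order all_algebra.
From mathcomp Require Import all_classical all_reals all_analysis.
Set Implicit Arguments. Unset Strict Implicit. Unset Printing Implicit Defensive.
Import Order.TTheory GRing.Theory Num.Theory.
Local Open Scope classical_set_scope.
Local Open Scope ring_scope.

(* Points of R^n are n-tuples of reals; n.-tuple R carries the library's
   product (= Borel) sigma-algebra [measure_tuple_display]. *)

Definition box (R : realType) (n : nat) (a b : n.-tuple R) : set (n.-tuple R) :=
  [set x | forall i : 'I_n, tnth a i <= tnth x i < tnth b i].

(* mu is Lebesgue measure on R^n: it gives every half-open box its volume.
   (By uniqueness of extension this characterizes Lebesgue measure on the
   Borel sets.) *)
Definition is_lebesgue (R : realType) (n : nat)
    (mu : {measure set (n.-tuple R) -> \bar R}) : Prop :=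
  forall a b : n.-tuple R, (forall i : 'I_n, tnth a i <= tnth b i) ->
    mu (box a b) = (\prod_(i < n) (tnth b i - tnth a i))%:E.

Definition dyadic_cube (R : realType) (n : nat) (j : int) (k : n.-tuple int)
    : set (n.-tuple R) :=
  [set x | forall i : 'I_n,
     (tnth k i)%:~R * (2%:R ^ j) <= tnth x i < ((tnth k i)%:~R + 1) * (2%:R ^ j)].

Definition is_dyadic (R : realType) (n : nat) (Q : set (n.-tuple R)) : Prop :=
  exists (j : int) (k : n.-tuple int), Q = @dyadic_cube R n j k.

Definition carleson (R : realType) (n : nat)
    (mu : {measure set (n.-tuple R) -> \bar R})
    (alpha : R) (S : set (set (n.-tuple R))) : Prop :=
  (forall Q, S Q -> is_dyadic Q) /\
  forall Q, S Q ->
    (\esum_(P in [set P | S P /\ P `<=` Q]) mu P <= alpha%:E * mu Q)%E.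

Definition bounded_set (R : realType) (n : nat) (A : set (n.-tuple R)) : Prop :=
  exists r : R, forall x, A x -> forall i : 'I_n, `|tnth x i| <= r.

Definition loc_integrable_Rn (R : realType) (n : nat)
    (mu : {measure set (n.-tuple R) -> \bar R}) (f : n.-tuple R -> R) : Prop :=
  measurable_fun setT f /\
  forall A, measurable A -> bounded_set A -> mu.-integrable A (EFin \o f).

Definition average (R : realType) (n : nat)
    (mu : {measure set (n.-tuple R) -> \bar R}) (f : n.-tuple R -> R)
    (Q : set (n.-tuple R)) : R :=
  fine (\int[mu]_(x in Q) (f x)%:E) / fine (mu Q).

Definition layer (R : realType) (n : nat)
    (mu : {measure set (n.-tuple R) -> \bar R}) (f : n.-tuple R -> R)
    (S : set (set (n.-tuple R))) (m k : nat) : set (set (n.-tuple R)) :=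
  [set Q | S Q /\ ((56%:R : R) ^+ (m * k.+1))^-1 < average mu f Q
                /\ average mu f Q <= ((56%:R : R) ^+ (m * k))^-1].

Definition EQ (R : realType) (n : nat) (Sk : set (set (n.-tuple R)))
    (Q : set (n.-tuple R)) : set (n.-tuple R) :=
  Q `\` \bigcup_(Q' in [set Q' | Sk Q' /\ Q' `<=` Q /\ Q' <> Q]) Q'.

(* Let Q belong to the layer S_k
   of an alpha-Carleson family S, and let F be the family of cubes of S_k
   strictly contained in Q, so that E_Q = Q \ U with U the union of F.  Then
     int_U f <= sum_{P in F} int_P f             (countable subadditivity)
             <= 56^{-mk} sum_{P in F} |P|        (upper layer bound on each P)
             <= 56^{-mk} (alpha - 1) |Q|         (Carleson condition at Q)
             <= 56^m (alpha - 1) int_Q f         (lower layer bound on Q),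
   and since int_Q f = int_{E_Q} f + int_U f, the smallness assumption
   56^m (alpha - 1) < 1 lets us absorb int_U f into the left-hand side. *)

From Pilot Require Import Defs.
From HB Require Import structures.
From mathcomp Require Import all_boot all_order all_algebra.
From mathcomp Require Import all_classical all_reals all_analysis.
From mathcomp Require Import ring lra measurable_realfun.
Import Order.TTheory GRing.Theory Num.Theory.
Local Open Scope classical_set_scope.
Local Open Scope ring_scope.

Section esum_facts.
Local Open Scope ereal_scope.
Context {R : realType} {T : choiceType}.

Lemma esumZl_le {I : set T} {a : T -> \bar R} {c : R} : (0 <= c)%R ->
  (forall i, 0 <= a i) ->
  \esum_(i in I) (c%:E * a i) <= c%:E * \esum_(i in I) a i.
Proof.
move=> c0 a0; apply: ge_ereal_sup => _ [X XI <-] /=.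
rewrite -ge0_mule_fsumr // lee_wpmul2l ?lee_fin //.
by apply: ereal_sup_ubound; exists X.
Qed.

Lemma le_esum_subset {I J : set T} {a : T -> \bar R} :
  (forall i, 0 <= a i) -> I `<=` J ->
  \esum_(i in I) a i <= \esum_(i in J) a i.
Proof.
move=> a0 IJ; rewrite (esumID I J) // (setIidr IJ) leeDl //.
by apply: esum_ge0.
Qed.
End esum_facts.

Section countable_family.
Local Open Scope ereal_scope.
Context {T : Type}.

(* A countable family of sets can be listed as a sequence, padded with empty
   sets; this preserves its union and every nonnegative set function sum
   (for set functions vanishing on the empty set). *)
Lemma countable_family_seq (F : set (set T)) : countable F ->
  exists e : (set T)^nat,
    [/\ forall i, F (e i) \/ e i = set0,
        \bigcup_(P in F) P = \bigcup_i e i &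
        forall (R : realType) (a : set T -> \bar R),
          (forall P, 0 <= a P) -> a set0 = 0 ->
          \sum_(i <oo) a (e i) = \esum_(P in F) a P].
Proof.
move=> /countable_injP[h hinj].
pose e i := xget set0 [set P | F P /\ h P = i].
have ehK P : F P -> e (h P) = P.
  move=> FP; apply: xget_unique => // P' [FP' hP'].
  by apply: hinj; rewrite ?inE.
have e_out i : ~ (h @` F) i -> e i = set0.
  by move=> hFi; apply: xgetPN => P [FP hP]; apply: hFi; exists P.
have e_alt i : F (e i) \/ e i = set0.
  by rewrite /e; case: xgetP => [P _ []|_]; [left|right].
exists e; split => //.
  apply/seteqP; split => x.
    by move=> [P FP Px]; exists (h P) => //; rewrite ehK.
  by move=> [i _]; case: (e_alt i) => [Fe|->] // ?; exists (e i).
move=> R a a0 a_set0.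
rewrite nneseries_esumT // (esumID (h @` F)) // [X in _ + X]esum1 ?adde0.
  rewrite setTI (esum_image F h (a \o e)) //.
  by apply: eq_esum => P FP /=; rewrite ehK.
by move=> i [_ hFi]; rewrite /= e_out.
Qed.
End countable_family.

Section nonneg_integral.
Local Open Scope ereal_scope.
Context {d} {T : measurableType d} {R : realType} (mu : {measure set T -> \bar R}).

Lemma countable_bigcup_measurable {F : set (set T)} : countable F ->
  (forall P, F P -> measurable P) -> measurable (\bigcup_(P in F) P).
Proof.
move=> /countable_family_seq[e [e_alt -> _]] mF.
by apply: bigcupT_measurable => i; case: (e_alt i) => [/mF|->].
Qed.

Context {f : T -> \bar R}.
Hypotheses (mf : measurable_fun setT f) (f0 : forall x, 0 <= f x).

Lemma ge0_integral_split {A B : set T} : measurable A -> measurable B ->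
  A `<=` B ->
  \int[mu]_(x in B) f x = \int[mu]_(x in B `\` A) f x + \int[mu]_(x in A) f x.
Proof.
move=> mA mB AB; rewrite -{1}(setDUK AB) ge0_integral_setU; first exact: addeC.
- exact: mA.
- exact: measurableD.
- by rewrite setDUK //; exact: measurable_funTS.
- by move=> x _.
- by rewrite disj_set2E setDIK.
Qed.

Lemma ge0_integral_bigcup_le (e : (set T)^nat) : (forall i, measurable (e i)) ->
  \int[mu]_(x in \bigcup_i e i) f x <= \sum_(i <oo) \int[mu]_(x in e i) f x.
Proof.
move=> me; have fe0 i x : 0 <= (f \_ (e i)) x by rewrite /patch; case: ifP.
have mfe i : measurable_fun setT (f \_ (e i)).
  by apply/(measurable_restrictT _ (me i)); exact: measurable_funTS.
have mU : measurable (\bigcup_i e i) by exact: bigcupT_measurable.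
rewrite (eq_eseriesr (fun i _ => integral_mkcond (e i) f)) -integral_nneseries //.
rewrite integral_mkcond; apply: ge0_le_integral => //.
- by move=> x _; rewrite /patch; case: ifP.
- by apply/(measurable_restrictT _ mU); exact: measurable_funTS.
- by apply: (ge0_emeasurable_sum (P := xpredT)) => [i x _ _|i _]; [exact: fe0|].
move=> x _; rewrite [leLHS]/patch; case: ifPn => [/set_mem[i _ xi]|_]; last first.
  by apply: nneseries_ge0 => j _ _; exact: fe0.
apply: (le_trans _ (nneseries_lim_ge i.+1 (fun j _ _ => fe0 j x))).
by rewrite big_nat_recr //= [X in _ <= _ + X]/patch mem_set // leeDr // sume_ge0.
Qed.

Lemma ge0_integral_countable_bigcup_le {F : set (set T)} : countable F ->
  (forall P, F P -> measurable P) ->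
  \int[mu]_(x in \bigcup_(P in F) P) f x <= \esum_(P in F) \int[mu]_(x in P) f x.
Proof.
move=> /countable_family_seq[e [e_alt -> sumE]] mF.
rewrite -sumE; last exact: integral_set0.
  by apply: ge0_integral_bigcup_le => i; case: (e_alt i) => [/mF|->].
by move=> P; exact: integral_ge0.
Qed.
End nonneg_integral.

Section dyadic_cubes.
Context {R : realType} {n : nat}.
Local Notation Rn := (n.-tuple R).

(* Half-open boxes are Borel sets: finite intersections of coordinate strips. *)
Lemma box_measurable (a b : Rn) : measurable (box a b).
Proof.
have -> : box a b = \bigcap_(i in [set: 'I_n])
    ((fun x : Rn => tnth x i) @^-1` `[tnth a i, tnth b i[).
  apply/seteqP; split => x /=.
    by move=> h i _ /=; rewrite in_itv /=; exact: h.
  by move=> h i; have := h i I; rewrite /= in_itv.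
apply: fin_bigcap_measurable => // i _.
rewrite -[X in measurable X]setTI.
by apply: measurable_tnth => //; exact: measurable_itv.
Qed.

Definition cube_min (j : int) (k : n.-tuple int) : Rn :=
  [tuple (tnth k i)%:~R * 2%:R ^ j | i < n].
Definition cube_max (j : int) (k : n.-tuple int) : Rn :=
  [tuple ((tnth k i)%:~R + 1) * 2%:R ^ j | i < n].

Lemma dyadic_cube_box j k : dyadic_cube j k = box (cube_min j k) (cube_max j k).
Proof. by apply/seteqP; split => x /= h i; have := h i; rewrite !tnth_mktuple. Qed.

Lemma cube_side j k i : tnth (cube_max j k) i - tnth (cube_min j k) i = 2%:R ^ j.
Proof. by rewrite !tnth_mktuple -mulrBl addrAC subrr add0r mul1r. Qed.

Lemma dyadic_measurable {Q : set Rn} : is_dyadic Q -> measurable Q.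
Proof. by move=> [j [k ->]]; rewrite dyadic_cube_box; exact: box_measurable. Qed.

Lemma norm_le_between (a b x : R) : a <= x <= b -> `|x| <= `|a| + `|b|.
Proof.
move=> /andP[ax xb]; rewrite ler_norml.
have := ler_norm b; have := ler_norm (- a); rewrite normrN.
have := normr_ge0 a; have := normr_ge0 b => *; apply/andP; split; lra.
Qed.

Lemma dyadic_bounded {Q : set Rn} : is_dyadic Q -> Defs.bounded_set Q.
Proof.
move=> [j [k ->]]; rewrite dyadic_cube_box.
exists (\sum_(i < n) (`|tnth (cube_min j k) i| + `|tnth (cube_max j k) i|)).
move=> x /(_ _) /andP box_x i; have [lo hi] := box_x i.
rewrite (bigD1 i) //= ler_wpDr //; first by apply: sumr_ge0 => *; rewrite addr_ge0.
by apply: norm_le_between; rewrite lo ltW.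
Qed.

Lemma dyadic_countable {F : set (set Rn)} :
  (forall Q, F Q -> is_dyadic Q) -> countable F.
Proof.
move=> Fd; pose cube (p : int * n.-tuple int) := @dyadic_cube R n p.1 p.2.
apply: (@sub_countable _ _ _ (cube @` [set: int * n.-tuple int])); last first.
  by apply: (card_le_trans (card_image_le _ _)); exact: countableP.
by apply: subset_card_le => P /Fd [j [k ->]]; exists (j, k).
Qed.

Lemma dyadic_lebesgue {mu : {measure set Rn -> \bar R}} {Q : set Rn} :
  is_lebesgue mu -> is_dyadic Q -> mu Q = (fine (mu Q))%:E /\ 0 < fine (mu Q).
Proof.
move=> leb [j [k ->]]; rewrite dyadic_cube_box leb /=; last first.
  by move=> i; rewrite -subr_ge0 cube_side exprz_ge0.
by split => //; apply: prodr_gt0 => i _; rewrite cube_side exprz_gt0.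
Qed.
End dyadic_cubes.

Definition strict_subfamily {T : Type} (F : set (set T)) (Q : set T) :
    set (set T) :=
  [set P | F P /\ P `<=` Q /\ P <> Q].

Lemma carleson_strict_subcubes {R : realType} {n : nat}
    {mu : {measure set (n.-tuple R) -> \bar R}} {alpha : R}
    {S F : set (set (n.-tuple R))} {Q : set (n.-tuple R)} :
  carleson mu alpha S -> S Q -> mu Q \is a fin_num ->
  F `<=` strict_subfamily S Q ->
  (\esum_(P in F) mu P <= ((alpha - 1) * fine (mu Q))%:E)%E.
Proof.
move=> [_ carl] SQ finQ FS.
pose G : set (set (n.-tuple R)) := [set P | S P /\ P `<=` Q].
have GQ : G `&` [set Q] = [set Q].
  by apply/seteqP; split => [P [_ ->] //|P ->]; split => //; split.
have FG : F `<=` G `&` ~` [set Q] by move=> P /FS[SP [PQ PnQ]].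
have := carl Q SQ; rewrite (esumID [set Q]) // GQ esum_set1 // -(fineK finQ).
have := le_esum_subset (measure_ge0 mu) FG.
have : (0 <= \esum_(P in F) mu P)%E by exact: esum_ge0.
case: (\esum_(P in F) mu P) => [s| |] //; case: (\esum_(P in _ `&` _) mu P) => [t| |] //=.
rewrite -EFinD -EFinM !lee_fin => s0 st; lra.
Qed.

Section layers.
Context {R : realType} {n : nat} {mu : {measure set (n.-tuple R) -> \bar R}}.
Context {alpha : R} {S : set (set (n.-tuple R))} {f : n.-tuple R -> R} {m k : nat}.
Hypotheses (leb : is_lebesgue mu) (carlS : carleson mu alpha S).
Hypothesis f_loc : loc_integrable_Rn mu f.
Local Notation Sk := (layer mu f S m k).

Lemma integral_average {P : set (n.-tuple R)} : is_dyadic P ->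
  (\int[mu]_(x in P) (f x)%:E = (average mu f P * fine (mu P))%:E)%E.
Proof.
move=> dP; have [_ mu0] := dyadic_lebesgue leb dP.
have mP := dyadic_measurable dP.
rewrite /average divfK ?gt_eqF // fineK //; apply: integrable_fin_num => //.
exact: (f_loc.2 _ mP (dyadic_bounded dP)).
Qed.

Lemma layer_dyadic {P : set (n.-tuple R)} : Sk P -> is_dyadic P.
Proof. by move=> [SP _]; exact: carlS.1. Qed.

Lemma layer_integral_le {P : set (n.-tuple R)} : Sk P ->
  (\int[mu]_(x in P) (f x)%:E <= ((56%:R ^+ (m * k))^-1)%:E * mu P)%E.
Proof.
move=> SkP; have dP := layer_dyadic SkP; have [-> mu0] := dyadic_lebesgue leb dP.
rewrite integral_average // -EFinM lee_fin ler_pM2r //.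
by case: SkP => _ [].
Qed.

Lemma layer_measure_le {Q : set (n.-tuple R)} : Sk Q ->
  (mu Q <= (56%:R ^+ (m * k.+1))%:E * \int[mu]_(x in Q) (f x)%:E)%E.
Proof.
move=> SkQ; have dQ := layer_dyadic SkQ; have [-> mu0] := dyadic_lebesgue leb dQ.
rewrite integral_average // -EFinM lee_fin mulrA ler_peMl //.
case: SkQ => _ [lo _]; rewrite -ler_pdivrMl ?exprn_gt0 // mulr1; exact: ltW.
Qed.

Lemma strict_subfamily_dyadic (Q P : set (n.-tuple R)) :
  strict_subfamily Sk Q P -> is_dyadic P.
Proof. by move=> [/layer_dyadic]. Qed.

Lemma strict_subfamily_measurable (Q : set (n.-tuple R)) :
  measurable (\bigcup_(P in strict_subfamily Sk Q) P).
Proof.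
apply: countable_bigcup_measurable.
  exact: dyadic_countable (strict_subfamily_dyadic Q).
by move=> P /strict_subfamily_dyadic /dyadic_measurable.
Qed.

Lemma integrand_measurable : measurable_fun setT (fun x => (f x)%:E).
Proof. by apply/measurable_EFinP; exact: f_loc.1. Qed.

Lemma layer_subcubes_integral_le {Q : set (n.-tuple R)} :
  1 <= alpha -> (forall x, 0 <= f x) -> Sk Q ->
  (\int[mu]_(x in \bigcup_(P in strict_subfamily Sk Q) P) (f x)%:E
     <= (56%:R ^+ m * (alpha - 1))%:E * \int[mu]_(x in Q) (f x)%:E)%E.
Proof.
move=> alpha1 f0 SkQ; set F := strict_subfamily Sk Q.
have f0E x : (0 <= (f x)%:E)%E by rewrite lee_fin.
have Fc := dyadic_countable (strict_subfamily_dyadic Q).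
have mF P (FP : F P) := dyadic_measurable (strict_subfamily_dyadic _ _ FP).
have [muQ mu0] := dyadic_lebesgue leb (layer_dyadic SkQ).
have sumF : (\esum_(P in F) mu P <= ((alpha - 1) * fine (mu Q))%:E)%E.
  by apply: (carleson_strict_subcubes carlS SkQ.1); [rewrite muQ|move=> P [[]]].
have c0 : 0 <= (56%:R ^+ (m * k))^-1 :> R by rewrite invr_ge0 exprn_ge0.
apply: (le_trans
  (ge0_integral_countable_bigcup_le mu integrand_measurable f0E Fc mF)).
apply: (@le_trans _ _ (\esum_(P in F) ((56%:R ^+ (m * k))^-1)%:E * mu P)%E).
  by apply: le_esum => P [SkP _]; exact: layer_integral_le.
apply: (le_trans (esumZl_le c0 (measure_ge0 mu))).
apply: (le_trans (lee_wpmul2l _ sumF)); first by rewrite lee_fin.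
have := layer_measure_le SkQ.
rewrite muQ (integral_average (layer_dyadic SkQ)) -!EFinM !lee_fin.
set I := _ * fine (mu Q) => muQ_le /=.
have a0 : 0 <= alpha - 1 by rewrite subr_ge0.
have scale : (56%:R ^+ (m * k))^-1 * ((alpha - 1) * (56%:R ^+ (m * k.+1) * I))
    = 56%:R ^+ m * (alpha - 1) * I.
  by rewrite mulnS exprD; field; rewrite expf_neq0 // pnatr_eq0.
by rewrite -scale ler_wpM2l // ler_wpM2l.
Qed.
End layers.

Lemma absorb_le {R : realType} {b : R} {I v u : \bar R} :
  0 <= b < 1 -> I \is a fin_num -> (0 <= v)%E -> (0 <= u)%E ->
  I = (v + u)%E -> (u <= b%:E * I)%E -> (I <= ((1 - b)^-1)%:E * v)%E.
Proof.
move=> /andP[b0 b1] finI v0 u0 IE; move: finI; rewrite {I}IE.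
case: v v0 => [v| |] // v0; case: u u0 => [u| |] // u0 _.
rewrite -EFinD -!EFinM !lee_fin in v0 u0 * => ub.
by rewrite ler_pdivlMl ?subr_gt0 //; nra.
Qed.

Theorem mainTheorem4 (R : realType) (n : nat)
    (mu : {measure set (n.-tuple R) -> \bar R})
    (m : nat) (alpha : R) (S : set (set (n.-tuple R)))
    (f : n.-tuple R -> R) (k : nat) (Q : set (n.-tuple R)) :
  is_lebesgue mu ->
  (0 < m)%N ->
  1 < alpha ->
  (56%:R : R) ^+ m * (alpha - 1) < 1 ->
  carleson mu alpha S ->
  (forall x, 0 <= f x) ->
  loc_integrable_Rn mu f ->
  (0 < k)%N ->
  layer mu f S m k Q ->
  (\int[mu]_(x in Q) (f x)%:E
     <= ((1 - (56%:R : R) ^+ m * (alpha - 1))^-1)%:E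
        * \int[mu]_(x in EQ (layer mu f S m k) Q) (f x)%:E)%E.
Proof.
move=> leb _ alpha1 small carlS f0 f_loc _ SkQ.
have dQ := layer_dyadic carlS SkQ.
have f0E x : (0 <= (f x)%:E)%E by rewrite lee_fin.
have UQ : \bigcup_(P in strict_subfamily (layer mu f S m k) Q) P `<=` Q.
  by move=> x [P [_ [PQ _]]]; exact: PQ.
have splitQ := ge0_integral_split mu (integrand_measurable f_loc) f0E
  (strict_subfamily_measurable carlS Q) (dyadic_measurable dQ) UQ.
have boundU := layer_subcubes_integral_le leb carlS f_loc (ltW alpha1) f0 SkQ.
apply: (absorb_le _ _ _ _ splitQ boundU).
- by rewrite small mulr_ge0 ?exprn_ge0 // subr_ge0 ltW.
- by rewrite (integral_average leb f_loc dQ).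
- by apply: integral_ge0 => x _.
- by apply: integral_ge0 => x _.
Qed.
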